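(* Let $q$ be a prime power, $1\le s<t$ integers, $\{u_1,\dots,u_t\}$ an $\mathbb{F}_q$-basis of $\mathbb{F}_{q^t}$, $W$ an arbitrary $\mathbb{F}_q$-subspace of $\mathbb{F}_{q^t}$ of dimension $s$, $A\subseteq\mathbb{F}_{q^t}$ and $\alpha^*\in A$. Let $L_W(x)=\prod_{w\in W}(x-w)$ and $g_i(x)=L_W\big(u_i(x-\alpha^* )\big)/(x-\alpha^* )$ for $i=1,\dots,t$. Then for every $\alpha\in A\setminus\{\alpha^*\}$, the set $\{g_1(\alpha),\dots,g_t(\alpha)\}$ has rank at most $t-s$ over $\mathbb{F}_q$. *)

From HB Require Import structures.
From mathcomp Require Import all_boot all_order all_algebra all_field.
Set Implicit Arguments. Unset Strict Implicit. Unset Printing Implicit Defensive.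
Import GRing.Theory.
Local Open Scope ring_scope.

(* F = F_q (any finite field), L = F_{q^t} a finite extension of F.
   finvect_type L is L with its canonical finite-type structure. *)

Definition subspace_poly_eval (F : finFieldType) (L : fieldExtType F)
  (W : {vspace L}) (y : L) : L :=
  \prod_(w : finvect_type L | (w : L) \in W) (y - w).

Definition g_fun (F : finFieldType) (L : fieldExtType F)
  (W : {vspace L}) (a0 ui x : L) : L :=
  subspace_poly_eval W (ui * (x - a0)) / (x - a0).

From HB Require Import structures.
From mathcomp Require Import all_boot all_order all_algebra all_field.
Set Implicit Arguments. Unset Strict Implicit. Unset Printing Implicit Defensive.
Import GRing.Theory.
Local Open Scope ring_scope.

(* L_W is F_q-linear: L_W(X + y) - L_W(X) - L_W(y) has degree below |W| and
   vanishes on W, and c^|W| = c^(q^s) = c for c in F_q.  With d = a - a0,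
   g_i(a) = L_W(u_i d) / d is the image of u_i under the linear map
   y |-> L_W(y d) / d, whose rank is at most that of L_W, i.e. at most
   t - dim ker L_W <= t - s since W lies in ker L_W. *)

Lemma size_monicB (R : nzRingType) (p q : {poly R}) :
  p \is monic -> q \is monic -> size p = size q -> (size (p - q)%R < size q)%N.
Proof.
move=> mp mq spq; rewrite -spq; have sp := polySpred (monic_neq0 mp).
rewrite [X in (_ < X)%N]sp ltnS; apply/leq_sizeP => j.
rewrite leq_eqVlt coefB => /orP[/eqP <-|lt_j].
  by rewrite -lead_coefE spq -lead_coefE (monicP mp) (monicP mq) subrr.
by rewrite !nth_default ?subrr // -?spq sp.
Qed.

Lemma size_comp_XaddC_subr (R : idomainType) (p : {poly R}) (y : R) :
  p \is monic -> (size (p \Po ('X + y%:P) - p)%R < size p)%N.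
Proof.
move=> mp; apply: size_monicB => //; last by rewrite size_comp_poly2 ?size_XaddC.
by rewrite monicE lead_coef_comp ?size_XaddC // lead_coefXaddC expr1n mulr1.
Qed.

Lemma horner_additive_of_periods (R : idomainType) (p : {poly R}) (r : seq R) :
  p \is monic -> uniq r -> r != [::] -> (size p <= (size r).+1)%N ->
  all (root p) r -> (forall w y, w \in r -> p.[w + y] = p.[y]) ->
  forall x y, p.[x + y] = p.[x] + p.[y].
Proof.
move=> mp ur r0 sp rootr per x y.
pose Q := p \Po ('X + y%:P) - p - (p.[y])%:P.
have hornerQ z : Q.[z] = p.[z + y] - p.[z] - p.[y].
  by rewrite !hornerE horner_comp !hornerE.
have : Q = 0.
  apply: (@roots_geq_poly_eq0 _ _ r) => //.
    apply/allP => w wr; rewrite rootE hornerQ per //.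
    by rewrite (rootP (allP rootr w wr)) subr0 subrr.
  rewrite (leq_trans (size_polyD _ _)) // size_polyN geq_max.
  rewrite (leq_trans (size_polyC_leq1 _)) ?lt0n ?size_eq0 // andbT.
  by rewrite -ltnS (leq_trans (size_comp_XaddC_subr y mp)).
move=> /(congr1 (horner^~ x)); rewrite hornerQ horner0 => /eqP.
by rewrite subr_eq0 subr_eq => /eqP ->; rewrite addrC.
Qed.

Lemma expf_card_exp (F : finFieldType) (c : F) (k : nat) : c ^+ (#|F| ^ k) = c.
Proof. by elim: k => [|k IHk]; rewrite ?expr1 // expnS exprM expf_card IHk. Qed.

Section SubspacePoly.

Variables (F : finFieldType) (L : fieldExtType F) (W : {vspace L}).
Local Notation LW := (subspace_poly_eval W).

Let elts : seq L := [seq w <- index_enum (finvect_type L) | (w : L) \in W].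

Definition subspace_poly : {poly L} := \prod_(w <- elts) ('X - w%:P).

Lemma horner_subspace_poly y : subspace_poly.[y] = LW y.
Proof.
rewrite horner_prod /subspace_poly_eval big_filter.
by under eq_bigr do rewrite hornerXsubC.
Qed.

Let mem_elts w : (w \in elts) = (w \in W).
Proof. by rewrite mem_filter (mem_index_enum (w : finvect_type L)) andbT. Qed.

Let uniq_elts : uniq elts.
Proof. exact/filter_uniq/(index_enum_uniq (finvect_type L)). Qed.

Lemma subspace_poly_eval_eq0 w : w \in W -> LW w = 0.
Proof.
move=> Ww; rewrite -horner_subspace_poly; apply/rootP.
by rewrite root_prod_XsubC mem_elts.
Qed.

Lemma subspace_poly_eval_translate w y : w \in W -> LW (w + y) = LW y.
Proof.
move=> Ww; rewrite /subspace_poly_eval.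
rewrite (reindex_inj (addIr (w : finvect_type L))) /=.
by apply: eq_big => [v|v _]; rewrite ?rpredDr // [w + y]addrC [v + w]addrC addrKA.
Qed.

Lemma subspace_poly_evalD x y : LW (x + y) = LW x + LW y.
Proof.
rewrite -!horner_subspace_poly; apply: horner_additive_of_periods.
- exact: monic_prod_XsubC.
- exact: uniq_elts.
- by apply/eqP => elts0; have := mem_elts 0; rewrite elts0 mem0v.
- by rewrite size_prod_XsubC.
- apply/allP => w; rewrite mem_elts => Ww.
  by apply/rootP; rewrite horner_subspace_poly subspace_poly_eval_eq0.
- move=> w z; rewrite mem_elts !horner_subspace_poly.
  exact: subspace_poly_eval_translate.
Qed.

Lemma subspace_poly_evalZ (c : F) x : LW (c *: x) = c *: LW x.
Proof.
have [->|c0] := eqVneq c 0.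
  by rewrite !scale0r subspace_poly_eval_eq0 ?mem0v.
have scale_inj : injective (fun v : finvect_type L => c *: v) := scalerI c0.
rewrite /subspace_poly_eval (reindex_inj scale_inj) /=.
rewrite (eq_bigl (fun v : finvect_type L => (v : L) \in W)) => [|v].
  under eq_bigr do rewrite -scalerBr.
  rewrite scaler_prod prodr_const (@card_vspace F (finvect_type L)).
  by rewrite expf_card_exp.
by apply/idP/idP => [/(memvZ c^-1)|/(memvZ c)]; rewrite ?scalerK.
Qed.

Lemma subspace_poly_eval_is_linear : linear LW.
Proof. by move=> c x y; rewrite subspace_poly_evalD subspace_poly_evalZ. Qed.

End SubspacePoly.

HB.instance Definition _ (F : finFieldType) (L : fieldExtType F)
    (W : {vspace L}) :=
  GRing.isLinear.Build F L L *:%R (subspace_poly_eval W)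
    (subspace_poly_eval_is_linear W).

Section RankBounds.

Variables (K : fieldType) (aT rT : vectType K) (f : 'Hom(aT, rT)).

Lemma dimv_limg_leq (U : {vspace aT}) : (\dim (f @: U) <= \dim U)%N.
Proof. by rewrite -(limg_ker_dim f U) leq_addl. Qed.

Lemma dimv_limg_subv_lker (U : {vspace aT}) :
  (U <= lker f)%VS -> (\dim (limg f) <= \dim {:aT} - \dim U)%N.
Proof.
move=> /dimvS le_U_ker; rewrite -(limg_ker_dim f fullv) capfv.
by rewrite leq_subRL ?leq_add2r // (leq_trans le_U_ker (leq_addr _ _)).
Qed.

End RankBounds.

Theorem lemma8 (F : finFieldType) (L : fieldExtType F) (q s t : nat)
  (hq : #|F| = q) (hs : (1 <= s)%N) (hst : (s < t)%N)
  (ht : \dim (fullv : {vspace L}) = t)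
  (u : t.-tuple L) (hu : basis_of fullv u)
  (W : {vspace L}) (hW : \dim W = s)
  (A : {pred L}) (a0 : L) (ha0 : a0 \in A) :
  forall a : L, a \in A -> a != a0 ->
    (\dim <<[seq g_fun W a0 ui a | ui <- u]>>%VS <= t - s)%N.
Proof.
(* For a = a0, x / 0 = 0 makes every g_i(a) vanish. *)
move=> a _ _; set d := a - a0.
pose LWlin : 'End(L) := linfun (subspace_poly_eval W).
have -> : [seq g_fun W a0 ui a | ui <- u]
           = map (amulr d^-1%R \o LWlin \o amulr d)%VF u.
  by apply: eq_map => ui; rewrite !comp_lfunE !lfunE.
rewrite -limg_span (eqP (andP hu).1) !limg_comp -hW -ht.
apply: leq_trans (dimv_limg_leq _ _) _.
apply: leq_trans (dimvS (limgS _ (subvf _))) _.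
apply: dimv_limg_subv_lker; apply/subvP => w Ww.
by rewrite memv_ker lfunE /= subspace_poly_eval_eq0.
Qed.
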